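(* Let $(X,d)$ be a metric space. Then $X$ is complete if and only if $(F_{USCG}(X),H_{\rm end})$ is complete.
   Context: A fuzzy set on $X$ is a function $u:X\to[0,1]$, with $\alpha$-cuts $[u]_\alpha=\{x: u(x)\ge\alpha\}$ for $\alpha\in(0,1]$ and $[u]_0=\overline{\{u>0\}}$. $F_{USC}(X)$ is the set of fuzzy sets with all $\alpha$-cuts ($\alpha\in[0,1]$) non-empty and closed; $F_{USCG}(X)=\{u\in F_{USC}(X): [u]_\alpha\text{ compact for all }\alpha\in(0,1]\}$. $X\times[0,1]$ is metrized by $\overline{d}((x,\alpha),(y,\beta))=d(x,y)+|\alpha-\beta|$; ${\rm end}\,u=\{(x,t)\in X\times[0,1]: u(x)\ge t\}$; $H_{\rm end}(u,v)=H({\rm end}\,u,{\rm end}\,v)$ where $H$ is the Hausdorff distance $H(A,B)=\max\{\sup_{a\in A}\inf_{b\in B}\overline{d}(a,b),\sup_{b\in B}\inf_{a\in A}\overline{d}(a,b)\}$. *)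

From HB Require Import structures.
From mathcomp Require Import all_boot all_order all_algebra.
From mathcomp Require Import all_classical all_reals all_analysis.
Set Implicit Arguments. Unset Strict Implicit. Unset Printing Implicit Defensive.
Import Order.TTheory GRing.Theory Num.Theory.
Import numFieldNormedType.Exports.
Local Open Scope classical_set_scope.
Local Open Scope ring_scope.

Section Fuzzy.
Context {R : realType} {X : metricType R}.

Definition d : X -> X -> R := @mdist R X.

(* alpha-cuts of a fuzzy set u : X -> [0,1] (values in R, range checked in FUSC) *)
Definition cut (u : X -> R) (a : R) : set X :=
  if a == 0 then closure [set x | 0 < u x] else [set x | a <= u x].

Definition FUSC : set (X -> R) :=
  [set u | (forall x, 0 <= u x <= 1) /\
           (forall a, 0 <= a <= 1 -> cut u a !=set0 /\ closed (cut u a))].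

Definition FUSCG : set (X -> R) :=
  [set u | FUSC u /\ (forall a, 0 < a <= 1 -> compact (cut u a))].

Definition dbar (p q : X * R) : R := d p.1 q.1 + `|p.2 - q.2|.

Definition endo (u : X -> R) : set (X * R) :=
  [set p | 0 <= p.2 <= 1 /\ p.2 <= u p.1].

End Fuzzy.

Definition hausdorff {R : realType} {T : Type} (D : T -> T -> R)
  (A B : set T) : R :=
  Num.max (sup [set inf [set D a b | b in B] | a in A])
          (sup [set inf [set D a b | a in A] | b in B]).

Definition Hend {R : realType} {X : metricType R} (u v : X -> R) : R :=
  hausdorff (@dbar R X) (endo u) (endo v).

Definition seq_complete {R : realType} {T : Type} (S : set T)
  (D : T -> T -> R) : Prop :=
  forall u : nat -> T, (forall n, S (u n)) ->
  (forall e : R, 0 < e -> exists N : nat, forall m n : nat,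
       (N <= m)%N -> (N <= n)%N -> D (u m) (u n) < e) ->
  exists l : T, S l /\
    (forall e : R, 0 < e -> exists N : nat, forall n : nat,
       (N <= n)%N -> D (u n) l < e).

From Pilot Require Import Defs.
From HB Require Import structures.
From mathcomp Require Import all_boot all_order all_algebra.
From mathcomp Require Import all_classical all_reals all_analysis.
From mathcomp Require Import ring lra zify.
Set Implicit Arguments. Unset Strict Implicit. Unset Printing Implicit Defensive.
Import Order.TTheory GRing.Theory Num.Theory.
Import numFieldNormedType.Exports.
Local Open Scope classical_set_scope.
Local Open Scope ring_scope.

(* Crisp points, the indicators [crisp x] of singletons, lie in F_USCG(X) with
   H_end(crisp x, crisp y) <= d(x, y), and if crisp x_n tends to u in F_USCG(X)
   then x_n tends to any y with u(y) = 1; so completeness of F_USCG(X) gives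
   completeness of X.

   Conversely, let (u_n) be H_end-Cauchy and let G be the upper limit of the
   endographs in X * [0,1], i.e. the points that are arbitrarily close to
   end u_n for infinitely many n.  G is closed, contains X * {0} and is closed
   downwards in the level, so it is the endograph of u(x) = sup {t | (x,t) in G}.
   By the Cauchy property, points of G are close to end u_n for large n;
   conversely, every point of end u_n is close to G, because a chain P_k in
   end u_(n_k) with steps at most c / 2^(k+1) has first coordinates converging
   in the complete space X.  Hence H_end(u_n, u) -> 0.  Each cut {u >= a},
   a > 0, is closed and lies within any delta of the compact cut
   {u_N >= a - delta} for N large, hence is compact since X is complete.
   Finally, points where u >= 1 - 2^-k cluster in the compact cut {u >= 1/2},
   and the cluster point lies in the 1-cut. *)

Section Excess.
Context {R : realType} {T : Type} (D : T -> T -> R).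
Hypothesis D_ge0 : forall a b, 0 <= D a b.

Definition excess (A B : set T) : R := sup [set inf [set D a b | b in B] | a in A].

Lemma inf_dist_le (B : set T) a b : B b -> inf [set D a b | b in B] <= D a b.
Proof. by move=> Bb; apply: ge_inf; [exists 0 => _ [c _ <-]|exists b]. Qed.

(* [sup] is 0 on sets that are not bounded above; the bound [M] rules this
   junk value out. *)
Lemma excess_lt_near (A B : set T) M e :
  (forall a, A a -> exists2 b, B b & D a b <= M) ->
  excess A B < e -> forall a, A a -> exists2 b, B b & D a b < e.
Proof.
move=> AB ABe a Aa; have [b0 Bb0 _] := AB a Aa.
have /inf_lt[|_ [b Bb <-] Dab] : inf [set D a b | b in B] < e.
- apply: le_lt_trans ABe; apply: sup_upper_bound; last by exists a.
  split; first by exists (inf [set D a b | b in B]), a.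
  exists M => _ [a' Aa' <-]; have [b Bb Dab] := AB a' Aa'.
  exact: le_trans (inf_dist_le _ Bb) Dab.
- by exists (D a b0), b0.
- by exists b.
Qed.

Lemma excess_le (A B : set T) e : 0 <= e ->
  (forall a, A a -> exists2 b, B b & D a b <= e) -> excess A B <= e.
Proof.
move=> e0 AB; have [->|/set0P[a Aa]] := eqVneq A set0.
  by rewrite /excess image_set0 sup0.
apply: ge_sup; first by exists (inf [set D a b | b in B]), a.
move=> _ [a' Aa' <-]; have [b Bb Dab] := AB a' Aa'.
exact: le_trans (inf_dist_le _ Bb) Dab.
Qed.

End Excess.

Section Endograph.
Context {R : realType} {X : metricType R}.
Implicit Types (x y z : X) (p q r : X * R) (u v : X -> R).

Lemma d_sym x y : d x y = d y x. Proof. exact: metric_sym. Qed.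
Lemma d_triangle x y z : d x z <= d x y + d y z. Proof. exact: metric_triangle. Qed.
Lemma d_ge0 x y : 0 <= d x y. Proof. exact: mdist_ge0. Qed.
Lemma dxx x : d x x = 0. Proof. exact: mdistxx. Qed.

Lemma dbar_ge0 p q : 0 <= dbar p q.
Proof. by rewrite addr_ge0 ?d_ge0. Qed.
Lemma dbar_sym p q : dbar p q = dbar q p.
Proof. by rewrite /dbar d_sym distrC. Qed.
Lemma dbar_triangle p q r : dbar p r <= dbar p q + dbar q r.
Proof. by rewrite /dbar addrACA lerD ?d_triangle ?ler_distD. Qed.
Lemma dbarxx p : dbar p p = 0.
Proof. by rewrite /dbar dxx subrr normr0 addr0. Qed.
Lemma d_le_dbar p q : d p.1 q.1 <= dbar p q.
Proof. by rewrite lerDl. Qed.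
Lemma dist_snd_le_dbar p q : `|p.2 - q.2| <= dbar p q.
Proof. by rewrite lerDr d_ge0. Qed.
Lemma dbar_vertical x s t : dbar (x, s) (x, t) = `|s - t|.
Proof. by rewrite /dbar dxx add0r. Qed.
Lemma dbar_horizontal x y t : dbar (x, t) (y, t) = d x y.
Proof. by rewrite /dbar subrr normr0 addr0. Qed.

Lemma endo_zero v x : 0 <= v x -> endo v (x, 0).
Proof. by rewrite /endo /= lexx ler01. Qed.

Lemma endo_near_zero u v : (forall x, 0 <= v x) ->
  forall p, endo u p -> exists2 q, endo v q & dbar p q <= 1.
Proof.
move=> v_ge0 [x t] [/andP[t0 t1] _]; exists (x, 0); first exact: endo_zero.
by rewrite dbar_vertical subr0 ger0_norm.
Qed.

Lemma HendE u v :
  Hend u v = Num.max (excess dbar (endo u) (endo v)) (excess dbar (endo v) (endo u)).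
Proof.
rewrite /Hend /hausdorff /excess; congr (Num.max _ (sup _)).
by apply: eq_imagel => q _; congr inf; apply: eq_imagel => p _; rewrite dbar_sym.
Qed.

Lemma Hend_lt_near u v e : (forall x, 0 <= u x) -> (forall x, 0 <= v x) ->
  Hend u v < e ->
  (forall p, endo u p -> exists2 q, endo v q & dbar p q < e) /\
  (forall q, endo v q -> exists2 p, endo u p & dbar q p < e).
Proof.
move=> u_ge0 v_ge0; rewrite HendE gt_max => /andP[uv vu].
split; [move: uv|move: vu].
  exact: (excess_lt_near dbar_ge0 (endo_near_zero v_ge0)).
exact: (excess_lt_near dbar_ge0 (endo_near_zero u_ge0)).
Qed.

Lemma Hend_le u v e : 0 <= e ->
  (forall p, endo u p -> exists2 q, endo v q & dbar p q <= e) ->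
  (forall q, endo v q -> exists2 p, endo u p & dbar q p <= e) ->
  Hend u v <= e.
Proof. by move=> e0 uv vu; rewrite HendE ge_max !(excess_le dbar_ge0 e0). Qed.

End Endograph.

Section Halving.
Context {R : realType}.
Implicit Types c e : R.

Lemma halfpow_gt0 c n : 0 < c -> 0 < c / 2 ^+ n.
Proof. by move=> c0; rewrite divr_gt0 ?exprn_gt0. Qed.

Lemma halfpowS c n : c / 2 ^+ n = c / 2 ^+ n.+1 + c / 2 ^+ n.+1.
Proof. by rewrite exprS; field; rewrite expf_neq0. Qed.

Lemma halfpow_le c m n : 0 <= c -> (m <= n)%N -> c / 2 ^+ n <= c / 2 ^+ m.
Proof.
move=> c0 mn.
by rewrite ler_wpM2l // lef_pV2 ?posrE ?exprn_gt0 // (ler_weXn2l _ mn) // ler1n.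
Qed.

Lemma halfpow_lt c e : 0 < c -> 0 < e -> exists k, c / 2 ^+ k < e.
Proof.
move=> c0 e0; have ec0 : 0 < e / c by rewrite divr_gt0.
have [k _ /(_ k (leqnn k))] := near_infty_natSinv_expn_lt (PosNum ec0).
by rewrite /= mul1r -(ltr_pM2l c0) mulrCA divff ?mulr1 ?gt_eqF //; exists k.
Qed.

End Halving.

Lemma chain_dist_le {R : realType} {T : Type} (D : T -> T -> R) (P : nat -> T) c :
  (forall a, D a a = 0) -> (forall a b e, D a e <= D a b + D b e) ->
  (forall k, D (P k) (P k.+1) <= c / 2 ^+ k.+1) ->
  forall m n, (m <= n)%N -> D (P m) (P n) <= c / 2 ^+ m - c / 2 ^+ n.
Proof.
move=> Dxx Dtri DP m n /subnKC <-; elim: (n - m)%N => [|j IH].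
  by rewrite addn0 Dxx subrr.
rewrite addnS; apply: le_trans (Dtri _ (P (m + j)%N) _) _.
have := DP (m + j)%N; have := halfpowS c (m + j)%N; lra.
Qed.

Lemma chain_cauchy {R : realType} {T : Type} (D : T -> T -> R) (P : nat -> T) c :
  (forall a, D a a = 0) -> (forall a b, D a b = D b a) ->
  (forall a b e, D a e <= D a b + D b e) -> 0 < c ->
  (forall k, D (P k) (P k.+1) <= c / 2 ^+ k.+1) ->
  forall e, 0 < e -> exists N, forall m n, (N <= m)%N -> (N <= n)%N ->
    D (P m) (P n) < e.
Proof.
move=> Dxx Dsym Dtri c0 DP e e0; have [K Ke] := halfpow_lt c0 e0; exists K.
suff P_near m n : (K <= m <= n)%N -> D (P m) (P n) < e.
  move=> m n Km Kn; have [mn|/ltnW nm] := leqP m n; first by rewrite P_near ?Km.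
  by rewrite Dsym P_near ?Kn.
move=> /andP[Km mn]; apply: le_lt_trans (chain_dist_le Dxx Dtri DP mn) _.
by have := halfpow_le (ltW c0) Km; have := halfpow_gt0 n c0; lra.
Qed.

Lemma chain_exists (T : Type) (S : nat -> set T) (E : nat -> T -> T -> Prop) x0 :
  S 0%N x0 -> (forall k x, S k x -> exists2 y, S k.+1 y & E k x y) ->
  exists P : nat -> T,
    [/\ P 0%N = x0, forall k, S k (P k) & forall k, E k (P k) (P k.+1)].
Proof.
move=> Sx0 step.
have /choice[f fP] : forall k, exists f : T -> T,
    forall x, S k x -> S k.+1 (f x) /\ E k x (f x).
  move=> k; suff /choice[f fP] : forall x, exists y, S k x -> S k.+1 y /\ E k x y.
    by exists f.
  by move=> x; have [/step[y]|] := pselect (S k x); [exists y|exists x].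
pose P := fix P k := if k is k'.+1 then f k' (P k') else x0.
have SP k : S k (P k) by elim: k => //= k /fP[].
by exists P; split => // k; have [] := fP k _ (SP k).
Qed.

Lemma nat_majorant (f : nat -> nat) : exists phi : nat -> nat,
  [/\ forall k, (f k <= phi k)%N, forall k, (k <= phi k)%N &
      {homo phi : m n / (m <= n)%N}].
Proof.
exists (fun k => \sum_(i < k.+1) f i + k)%N; split => [k|k|].
- by rewrite big_ord_recr /=; lia.
- exact: leq_addl.
- apply: homo_leq => [//|???/leq_trans|k]; first exact.
  by rewrite [in X in (_ <= X)%N]big_ord_recr /=; lia.
Qed.

Section CompleteMetric.
Context {R : realType} {X : metricType R}.
Hypothesis X_complete : seq_complete [set: X] (@d R X).

Lemma cvg_of_small_balls (F : set_system X) : ProperFilter F ->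
  (forall r, 0 < r -> exists c, F [set x | d c x < r]) -> exists p : X, F --> p.
Proof.
move=> FF Fballs.
have /choice[c Fc] : forall k, exists c, F [set x | d c x < 1 / 2 ^+ k].
  by move=> k; apply/Fballs/halfpow_gt0.
have c_near m n : d (c m) (c n) < 1 / 2 ^+ m + 1 / 2 ^+ n.
  have [x [cmx cnx]] := filter_ex (filterI (Fc m) (Fc n)).
  by apply: le_lt_trans (d_triangle _ x _) _; rewrite (d_sym x) ltrD.
have c_cauchy e : 0 < e -> exists N, forall m n, (N <= m)%N -> (N <= n)%N ->
    d (c m) (c n) < e.
  move=> e0; have [K Ke] := halfpow_lt (c := 2) (ltr0Sn _ 1) e0.
  exists K => m n Km Kn; apply: lt_le_trans (c_near m n) _.
  have := halfpow_le (@ler01 R) Km; have := halfpow_le (@ler01 R) Kn; lra.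
have [p [_ cp]] := X_complete (fun _ => I) c_cauchy.
exists p; apply/metricType_numDomainType.fcvgrPdist_lt => r r0.
have r2 : 0 < r / 2 by rewrite divr_gt0.
have [K1 K1r] := halfpow_lt (@ltr01 R) r2; have [K2 K2r] := cp _ r2.
apply: filterS (Fc (maxn K1 K2)) => x /= cx.
apply: le_lt_trans (d_triangle p (c (maxn K1 K2)) x) _.
have := K2r _ (leq_maxr K1 K2); have := halfpow_le (@ler01 R) (leq_maxl K1 K2).
rewrite d_sym; lra.
Qed.

Lemma ultra_ball_of_near_compact (K C : set X) δ (F : set_system X) :
  compact C -> 0 < δ -> (forall x, K x -> exists2 y, C y & d x y < δ) ->
  UltraFilter F -> F K -> exists c, F [set x | d c x < δ + δ].
Proof.
move=> Cc δ0 KC UF FK; have FF : ProperFilter F by exact: ultra_proper.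
(* Transport F to C along [d x y < δ].  By ultrality F contains the
   [δ + δ]-ball around a cluster point [c] of the transported filter, for
   otherwise the transport of the complement of that ball would miss the
   [δ]-ball around [c]. *)
pose near_C (S : set X) := [set y | C y /\ exists2 x, (S `&` K) x & d x y < δ].
have GF : Filter (filter_from F near_C).
  apply: filter_from_filter; first by exists setT; exact: filterT.
  move=> S S' FS FS'; exists (S `&` S'); first exact: filterI.
  by move=> y [Cy [x [[Sx S'x] Kx] xy]]; split; split => //; exists x.
have GP : ProperFilter (filter_from F near_C).
  apply: filter_from_proper => S FS.
  have [x [Sx Kx]] := filter_ex (filterI FS FK).
  by have [y Cy xy] := KC x Kx; exists y; split => //; exists x.
have [|c [_ c_cl]] := Cc _ GP; first by exists setT; [exact: filterT|move=> y []].
exists c; have [//|Fnear] := in_ultra_setVsetC [set x | d c x < δ + δ] UF.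
have G_far : filter_from F near_C (near_C (~` [set x | d c x < δ + δ])).
  by exists (~` [set x | d c x < δ + δ]).
have [y [[_ [x [farx _] xy]] cy]] := c_cl _ _ G_far (nbhsx_ballx c _ δ0).
move: cy; rewrite ballEmdist /= -/(d c y) => cy; case: farx.
by apply: le_lt_trans (d_triangle c y x) _; rewrite (d_sym y) ltrD.
Qed.

Lemma compact_of_near_compact (K : set X) : closed K ->
  (forall δ, 0 < δ -> exists2 C, compact C &
     forall x, K x -> exists2 y, C y & d x y < δ) -> compact K.
Proof.
move=> Kcl K_near; rewrite compact_ultra => F UF FK.
have FF : ProperFilter F by exact: ultra_proper.
have [|p Fp] := cvg_of_small_balls FF.
  move=> r r0; have r2 : 0 < r / 2 by rewrite divr_gt0.
  have [C Cc KC] := K_near _ r2.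
  by rewrite [r]splitr; exact: ultra_ball_of_near_compact Cc r2 KC UF FK.
exists p; split => //; apply: Kcl => B /Fp FB.
by have [x [Kx Bx]] := filter_ex (filterI FK FB); exists x.
Qed.

End CompleteMetric.

Section Limsup.
Context {R : realType} {X : metricType R}.
Variable U : nat -> X -> R.
Hypothesis U_ge0 : forall n x, 0 <= U n x.

Definition endo_limsup : set (X * R) := [set p | 0 <= p.2 <= 1 /\
  forall e, 0 < e -> forall N, exists2 n, (N <= n)%N &
    exists2 q, endo (U n) q & dbar p q < e].

Lemma limsup_zero x : endo_limsup (x, 0).
Proof.
split=> [|e e0 N]; first by rewrite lexx ler01.
by exists N => //; exists (x, 0); rewrite ?dbarxx //; apply: endo_zero.
Qed.

Lemma limsup_closed p : 0 <= p.2 <= 1 ->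
  (forall e, 0 < e -> exists2 p', endo_limsup p' & dbar p p' < e) ->
  endo_limsup p.
Proof.
move=> p01 p_near; split=> // e e0 N; have e2 : 0 < e / 2 by rewrite divr_gt0.
have [p' [_ p'_lim] pp'] := p_near _ e2; have [n Nn [q qU p'q]] := p'_lim _ e2 N.
exists n => //; exists q => //; apply: le_lt_trans (dbar_triangle p p' q) _.
by rewrite [e]splitr ltrD.
Qed.

Lemma limsup_down x s t : endo_limsup (x, t) -> 0 <= s <= t -> endo_limsup (x, s).
Proof.
move=> [/andP[t0 t1] xt_lim] /andP[s0 st]; split=> [|e e0 N].
  by rewrite s0 (le_trans st t1).
have [n Nn [[y r] [/andP[/= r0 r1] rU] xy]] := xt_lim e e0 N.
exists n => //; exists (y, Num.min r s).
  by split; rewrite /= ?le_min ?r0 ?s0 ?ge_min ?r1 ?rU.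
apply: le_lt_trans xy; rewrite /dbar /= lerD2l.
have [rs|sr] := leP r s; last by rewrite subrr normr0.
by rewrite !ger0_norm ?subr_ge0 ?lerB // (le_trans rs).
Qed.

Definition limsup_fuzzy (x : X) : R := sup [set t | endo_limsup (x, t)].

Lemma limsup_fuzzy_has_sup x : has_sup [set t | endo_limsup (x, t)].
Proof. by split; [exists 0; exact: limsup_zero|exists 1 => t [/andP[]]]. Qed.

Lemma limsup_fuzzy_ub x t : endo_limsup (x, t) -> t <= limsup_fuzzy x.
Proof. by move=> xt; apply: sup_upper_bound; [exact: limsup_fuzzy_has_sup|]. Qed.

Lemma limsup_fuzzy01 x : 0 <= limsup_fuzzy x <= 1.
Proof.
rewrite limsup_fuzzy_ub; last exact: limsup_zero.
by apply: ge_sup; [exists 0; exact: limsup_zero|move=> t [/andP[]]].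
Qed.

Lemma limsup_fuzzy_ge0 x : 0 <= limsup_fuzzy x.
Proof. by case/andP: (limsup_fuzzy01 x). Qed.

Lemma limsup_fuzzy_in x : endo_limsup (x, limsup_fuzzy x).
Proof.
apply: limsup_closed; first exact: limsup_fuzzy01.
move=> e e0; have [t xt te] := sup_adherent e0 (limsup_fuzzy_has_sup x).
exists (x, t) => //; rewrite dbar_vertical ger0_norm ?subr_ge0 ?limsup_fuzzy_ub //.
by rewrite ltrBlDr -ltrBlDl.
Qed.

Lemma endo_limsup_fuzzy : endo limsup_fuzzy = endo_limsup.
Proof.
apply/seteqP; split=> -[x t]; last first.
  by move=> xt; split; [case: xt|exact: limsup_fuzzy_ub].
by move=> [/andP[t0 _] tu]; apply: limsup_down (limsup_fuzzy_in x) _; rewrite t0.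
Qed.

Lemma limsup_fuzzy_cut_closed a : 0 <= a <= 1 -> closed [set x | a <= limsup_fuzzy x].
Proof.
move=> a01 x x_cl; apply: limsup_fuzzy_ub; apply: limsup_closed => // e e0.
have [y [ay xy]] := x_cl _ (nbhsx_ballx x e e0).
exists (y, a); first by rewrite -endo_limsup_fuzzy.
by move: xy; rewrite ballEmdist dbar_horizontal.
Qed.

End Limsup.

Section CauchyLimit.
Context {R : realType} {X : metricType R}.
Variable U : nat -> X -> R.
Hypothesis U_FUSCG : forall n, FUSCG (U n).
Hypothesis U_cauchy : forall e : R, 0 < e -> exists N : nat, forall m n : nat,
  (N <= m)%N -> (N <= n)%N -> Hend (U m) (U n) < e.
Hypothesis X_complete : seq_complete [set: X] (@d R X).

Local Notation u := (limsup_fuzzy U).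

Let U_ge0 n x : 0 <= U n x.
Proof. by have [[/(_ x)/andP[]]] := U_FUSCG n. Qed.

Lemma endo_cauchy e : 0 < e -> exists N, forall m n, (N <= m)%N -> (N <= n)%N ->
  forall p, endo (U m) p -> exists2 q, endo (U n) q & dbar p q < e.
Proof.
move=> e0; have [N UN] := U_cauchy e0; exists N => m n Nm Nn.
by have [] := Hend_lt_near (U_ge0 m) (U_ge0 n) (UN m n Nm Nn).
Qed.

Lemma limsup_near_endo e : 0 < e -> exists N, forall n, (N <= n)%N ->
  forall p, endo_limsup U p -> exists2 q, endo (U n) q & dbar p q < e.
Proof.
move=> e0; have e2 : 0 < e / 2 by rewrite divr_gt0.
have [N UN] := endo_cauchy e2; exists N => n Nn p [_ p_lim].
have [m Nm [q qU pq]] := p_lim _ e2 N; have [q' q'U qq'] := UN m n Nm Nn q qU.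
exists q' => //; apply: le_lt_trans (dbar_triangle p q q') _.
by rewrite [e]splitr ltrD.
Qed.

Lemma endo_chain c : 0 < c -> exists N, forall n, (N <= n)%N ->
  forall q, endo (U n) q -> exists (P : nat -> X * R) (idx : nat -> nat),
  [/\ P 0%N = q, forall k, (k <= idx k)%N /\ endo (U (idx k)) (P k) &
      forall k, dbar (P k) (P k.+1) <= c / 2 ^+ k.+1].
Proof.
move=> c0; have /choice[Nf UNf] : forall k, exists N, forall m n,
    (N <= m)%N -> (N <= n)%N -> forall p, endo (U m) p ->
    exists2 q, endo (U n) q & dbar p q < c / 2 ^+ k.+1.
  by move=> k; apply/endo_cauchy/halfpow_gt0.
have [phi [Nf_phi k_phi phi_homo]] := nat_majorant Nf.
exists (phi 0%N) => n phi0n q qU; pose idx k := maxn n (phi k).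
have Nf_idx k : (Nf k <= idx k)%N /\ (Nf k <= idx k.+1)%N.
  by rewrite !(leq_trans (Nf_phi k)) ?leq_max ?phi_homo ?orbT.
have [|k p pU|P [P0 PU Pd]] := @chain_exists _ (fun k => endo (U (idx k)))
    (fun k p p' => dbar p p' <= c / 2 ^+ k.+1) q.
- by rewrite /= /idx (maxn_idPl phi0n).
- have [p' p'U pp'] := UNf k _ _ (Nf_idx k).1 (Nf_idx k).2 p pU.
  by exists p' => //; exact: ltW.
exists P, idx; split => // k; split => //.
by rewrite (leq_trans (k_phi k)) ?leq_maxr.
Qed.

Lemma chain_limit_limsup (P : nat -> X * R) (idx : nat -> nat) c : 0 < c ->
  (forall k, (k <= idx k)%N /\ endo (U (idx k)) (P k)) ->
  (forall k, dbar (P k) (P k.+1) <= c / 2 ^+ k.+1) ->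
  exists2 p, endo_limsup U p & dbar (P 0%N) p <= c + c.
Proof.
move=> c0 PU Pd; have Pdist := chain_dist_le dbarxx dbar_triangle Pd.
have P_cauchy e : 0 < e -> exists N, forall m n, (N <= m)%N -> (N <= n)%N ->
    d (P m).1 (P n).1 < e.
  move=> /(chain_cauchy dbarxx dbar_sym dbar_triangle c0 Pd)[N PN].
  by exists N => m n Nm Nn; exact: le_lt_trans (d_le_dbar _ _) (PN m n Nm Nn).
have [y [_ Py]] := X_complete (fun _ => I) P_cauchy.
(* The levels (P k).2 need not converge; [s] is a common lower bound of
   them within [c] of (P 0).2, and lowering the level keeps points in the
   endographs. *)
pose s := Num.max 0 ((P 0%N).2 - c).
have P2_bound k : `|(P 0%N).2 - (P k).2| <= c.
  apply: le_trans (dist_snd_le_dbar _ _) _; apply: le_trans (Pdist _ _ (leq0n k)) _.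
  by rewrite expr0 divr1 gerBl ltW ?halfpow_gt0.
have s_le k : s <= (P k).2.
  have [_ [/andP[Pk0 _] _]] := PU k.
  by move: (P2_bound k); rewrite ler_norml ge_max Pk0 /= => /andP[_ ?]; lra.
exists (y, s); first split.
- by rewrite le_max lexx /= (le_trans (s_le 0%N)) //; case: (PU 0%N) => _ [/andP[]].
- move=> e e0 N; have [K Ke] := Py e e0; exists (idx (maxn K N)).
    by rewrite (leq_trans _ (PU _).1) ?leq_maxr.
  exists ((P (maxn K N)).1, s); last by rewrite dbar_horizontal d_sym Ke ?leq_maxl.
  have [_ [/andP[_ Pk1] PkU]] := PU (maxn K N).
  by rewrite /endo /= le_max lexx (le_trans (s_le _) Pk1) (le_trans (s_le _) PkU).
apply: lerD => /=.
- apply/ler_addgt0Pr => e e0; have [K Ke] := Py e e0.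
  apply: le_trans (d_triangle _ (P K).1 _) _.
  apply: lerD; last exact: ltW (Ke K (leqnn K)).
  apply: le_trans (d_le_dbar _ _) _; apply: le_trans (Pdist _ _ (leq0n K)) _.
  by rewrite expr0 divr1 gerBl ltW ?halfpow_gt0.
- by move: (s_le 0%N); rewrite ger0_norm ?subr_ge0 // lerBlDl -lerBlDr le_max lexx orbT.
Qed.

Lemma endo_near_limsup e : 0 < e -> exists N, forall n, (N <= n)%N ->
  forall q, endo (U n) q -> exists2 p, endo_limsup U p & dbar q p <= e.
Proof.
move=> e0; have e2 : 0 < e / 2 by rewrite divr_gt0.
have [N chain] := endo_chain e2; exists N => n Nn q qU.
have [P [idx [<- PU Pd]]] := chain n Nn q qU.
by rewrite [e]splitr; exact: chain_limit_limsup e2 PU Pd.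
Qed.

Lemma Hend_limsup_cvg e : 0 < e -> exists N, forall n, (N <= n)%N -> Hend (U n) u < e.
Proof.
move=> e0; have e2 : 0 < e / 2 by rewrite divr_gt0.
have [N1 UN1] := limsup_near_endo e2; have [N2 UN2] := endo_near_limsup e2.
exists (maxn N1 N2) => n; rewrite geq_max => /andP[N1n N2n].
apply: le_lt_trans (_ : e / 2 < e); last by rewrite ltr_pdivrMr // ltr_pMr // ltr1n.
apply: Hend_le; rewrite ?(endo_limsup_fuzzy U_ge0); first exact: ltW.
  exact: UN2 n N2n.
by move=> p /(UN1 n N1n)[q qU pq]; exists q; rewrite ?ltW.
Qed.

Lemma limsup_fuzzy_cut_compact a : 0 < a <= 1 -> compact [set x | a <= u x].
Proof.
move=> /andP[a0 a1]; apply: compact_of_near_compact => //.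
  by apply: (limsup_fuzzy_cut_closed U_ge0); rewrite a1 andbT ltW.
move=> δ δ0; pose r := Num.min δ (a / 2).
have r0 : 0 < r by rewrite lt_min δ0 divr_gt0.
have ra : 0 < a - r by rewrite subr_gt0 gt_min ltr_pdivrMr // ltr_pMr // ltr1n orbT.
have [N UN] := Hend_limsup_cvg r0.
have [_ near_UN] := Hend_lt_near (U_ge0 N) (limsup_fuzzy_ge0 U_ge0) (UN N (leqnn N)).
exists [set y | a - r <= U N y].
  have [_ /(_ (a - r))] := U_FUSCG N; rewrite /Defs.cut gt_eqF //; apply.
  by rewrite ra /=; have := ltW r0; lra.
move=> x ax; have xa : endo u (x, a) by split => //=; rewrite a1 andbT ltW.
have [[y t] [_ tU] xy] := near_UN _ xa.
exists y.
  apply: le_trans tU; have := le_lt_trans (dist_snd_le_dbar _ _) xy.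
  by rewrite ltr_norml /= => /andP[_ ?]; lra.
apply: lt_le_trans (le_lt_trans (d_le_dbar _ _) xy) _.
by rewrite ge_min lexx.
Qed.

Lemma limsup_fuzzy_near_one e : 0 < e -> exists x, 1 - e <= u x.
Proof.
move=> e0; have [N UN] := endo_near_limsup e0.
have [|] := (U_FUSCG N).1.2 1; first by rewrite ler01 lexx.
rewrite /Defs.cut oner_eq0 => -[y /= y1] _.
have y1U : endo (U N) (y, 1) by rewrite /endo /= ler01 lexx.
have [[z t] zt yz] := UN N (leqnn N) _ y1U; exists z.
apply: le_trans (limsup_fuzzy_ub U_ge0 zt); move: (le_trans (dist_snd_le_dbar _ _) yz).
by rewrite ler_norml /= => /andP[_ ?]; lra.
Qed.

Lemma limsup_fuzzy_one : exists x, 1 <= u x.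
Proof.
have /choice[xs xs_near] : forall k, exists x, 1 - 1 / 2 ^+ k <= u x.
  by move=> k; apply/limsup_fuzzy_near_one/halfpow_gt0.
have xs_cut t : t < 1 -> (xs @ \oo) [set x | t <= u x].
  move=> t1; have [|K Kt] := halfpow_lt (@ltr01 R) (_ : 0 < 1 - t).
    by rewrite subr_gt0.
  exists K => // k /= Kk; apply: le_trans (xs_near k).
  by have := halfpow_le (@ler01 R) Kk; lra.
have half01 : 0 < (1 / 2 : R) <= 1.
  by rewrite divr_gt0 // ler_pdivrMr // mul1r ler1n.
have [|p [_ p_cl]] := limsup_fuzzy_cut_compact half01 _ (xs_cut _ _).
  by rewrite ltr_pdivrMr // mul1r ltr1n.
exists p; apply/ler_addgt0Pr => e e0; pose t := Num.max 0 (1 - e).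
have t01 : 0 <= t <= 1 by rewrite le_max lexx ge_max ler01 /=; lra.
have /(limsup_fuzzy_cut_closed U_ge0 t01) : closure [set x | t <= u x] p.
  by move: p_cl; rewrite clusterE; apply; apply: xs_cut; rewrite gt_max ltr01 /=; lra.
by rewrite /= ge_max => /andP[_]; lra.
Qed.

Lemma limsup_fuzzy_FUSCG : FUSCG u.
Proof.
have [x1 ux1] := limsup_fuzzy_one.
split; last first.
  move=> a /andP[a0 a1]; rewrite /Defs.cut gt_eqF //.
  by apply: limsup_fuzzy_cut_compact; rewrite a0.
split=> [x|a /andP[a0 a1]]; first exact: limsup_fuzzy01.
have [->|an0] := eqVneq a 0.
  rewrite /Defs.cut eqxx; split; last exact: closed_closure.
  by exists x1; apply: subset_closure; rewrite /= (lt_le_trans ltr01 ux1).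
rewrite /Defs.cut (negbTE an0); split; first by exists x1; exact: le_trans ux1.
by apply: (limsup_fuzzy_cut_closed U_ge0); rewrite a0.
Qed.

End CauchyLimit.

Lemma FUSCG_complete_of_complete {R : realType} {X : metricType R} :
  seq_complete [set: X] (@d R X) -> seq_complete (@FUSCG R X) (@Hend R X).
Proof.
move=> X_complete U U_FUSCG U_cauchy; exists (limsup_fuzzy U).
by split; [exact: limsup_fuzzy_FUSCG|exact: Hend_limsup_cvg].
Qed.

Section Crisp.
Context {R : realType} {X : metricType R}.
Implicit Types (c y : X) (v : X -> R).

Definition crisp c : X -> R := fun y => if `[< y = c >] then 1 else 0.

Lemma crisp_id c : crisp c c = 1.
Proof. by rewrite /crisp asboolT. Qed.

Lemma crisp01 c y : 0 <= crisp c y <= 1.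
Proof. by rewrite /crisp; case: ifP; rewrite ?lexx ?ler01. Qed.

Lemma crisp_gt0 c y : 0 < crisp c y -> y = c.
Proof. by rewrite /crisp; case: asboolP; rewrite ?ltxx. Qed.

Lemma cut_crisp c a : 0 < a <= 1 -> Defs.cut (crisp c) a = [set c].
Proof.
move=> /andP[a0 a1]; rewrite /Defs.cut gt_eqF //; apply/seteqP; split=> y /=.
  by move=> ay; apply: crisp_gt0; exact: lt_le_trans ay.
by move=> ->; rewrite crisp_id.
Qed.

Lemma crisp_FUSCG c : FUSCG (crisp c).
Proof.
split=> [|a a01]; last by rewrite cut_crisp //; exact: compact_set1.
split=> [y|a /andP[a0 a1]]; first exact: crisp01.
have [->|an0] := eqVneq a 0.
  rewrite /Defs.cut eqxx; split; last exact: closed_closure.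
  by exists c; apply: subset_closure; rewrite /= crisp_id ltr01.
have a_gt0 : 0 < a by rewrite lt_neqAle eq_sym an0.
rewrite cut_crisp ?a_gt0 //; split; first by exists c.
apply: compact_closed; [exact: metric_hausdorff|exact: compact_set1].
Qed.

Lemma endo_crisp_near c c' p : endo (crisp c) p ->
  exists2 q, endo (crisp c') q & dbar p q <= d c c'.
Proof.
case: p => y t [/andP[t0 t1] /= tc]; have [->|yc] := pselect (y = c).
  by exists (c', t); rewrite ?dbar_horizontal // /endo /= crisp_id t0 t1.
exists (y, 0); first by apply: endo_zero; case/andP: (crisp01 c' y).
have -> : t = 0 by apply/eqP; rewrite eq_le t0 andbT; move: tc; rewrite /crisp asboolF.
by rewrite dbar_vertical subrr normr0 d_ge0.
Qed.

Lemma Hend_crisp_le c c' : Hend (crisp c) (crisp c') <= d c c'.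
Proof.
apply: Hend_le; [exact: d_ge0|exact: endo_crisp_near|].
by rewrite d_sym; exact: endo_crisp_near.
Qed.

Lemma Hend_crisp_lt c v y e : (forall x, 0 <= v x) -> 1 <= v y -> e <= 1 ->
  Hend (crisp c) v < e -> d c y < e.
Proof.
move=> v_ge0 vy e1 cv.
have crisp_ge0 x : 0 <= crisp c x by case/andP: (crisp01 c x).
have [_ near_c] := Hend_lt_near crisp_ge0 v_ge0 cv.
have [|[z t] [_ tc] yz] := near_c (y, 1); first by rewrite /endo /= ler01 lexx.
have z_c : z = c.
  apply: crisp_gt0; apply: lt_le_trans tc.
  move: (le_lt_trans (dist_snd_le_dbar _ _) yz).
  by rewrite ltr_norml /= => /andP[_ ?]; lra.
by rewrite -z_c d_sym; exact: le_lt_trans (d_le_dbar _ _) yz.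
Qed.

Lemma complete_of_FUSCG_complete :
  seq_complete (@FUSCG R X) (@Hend R X) -> seq_complete [set: X] (@d R X).
Proof.
move=> FUSCG_complete x _ x_cauchy.
have [|l [[[l01 l_cuts] _] x_l]] :=
    FUSCG_complete (fun n => crisp (x n)) (fun n => crisp_FUSCG (x n)).
  move=> e e0; have [N xN] := x_cauchy e e0; exists N => m n Nm Nn.
  exact: le_lt_trans (Hend_crisp_le _ _) (xN m n Nm Nn).
have [|[y]] := l_cuts 1; first by rewrite ler01 lexx.
rewrite /Defs.cut oner_eq0 => /= ly _; exists y; split=> // e e0.
have l_ge0 z : 0 <= l z by case/andP: (l01 z).
have e1_gt0 : 0 < Num.min e 1 by rewrite lt_min e0 ltr01.
have e1_le1 : Num.min e 1 <= 1 by rewrite ge_min lexx orbT.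
have [N xN] := x_l _ e1_gt0; exists N => n Nn.
by move: (Hend_crisp_lt l_ge0 ly e1_le1 (xN n Nn)); rewrite lt_min => /andP[].
Qed.

End Crisp.

Theorem theorem5p11 (R : realType) (X : metricType R) :
  seq_complete [set: X] (@d R X) <-> seq_complete (@FUSCG R X) (@Hend R X).
Proof.
by split; [exact: FUSCG_complete_of_complete|exact: complete_of_FUSCG_complete].
Qed.
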